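(* Let $(\mathcal{H},\langle\cdot,\cdot\rangle)$ be a real Hilbert space with induced norm $\|\cdot\|$. Let $f:\mathcal{H}\to\mathbb{R}$ be $\mu$-strongly convex and $L$-smooth with $0<\mu<L<+\infty$, and let $g:\mathcal{H}\to\mathbb{R}\cup\{+\infty\}$ be convex, proper and lower semicontinuous. Let $q=\mu/L$ and let $((x^k,y^k,z^k))_{k\in\mathbb{N}_0}$ be generated by the Prox-TMM method (described in the context) from an arbitrary $x^0\in\mathcal{H}$, and let $x^\star$ be the unique minimizer of $f+g$. Then $\|z^k-x^\star\|\in\mathcal{O}\big((1-\sqrt q)^k\big)$ as $k\to\infty$.
   Context: $f$ is $L$-smooth if Fréchet differentiable with $L$-Lipschitz gradient; $\mu$-strongly convex means $f-\frac{\mu}{2}\|\cdot\|^2$ is convex. For $\gamma>0$, $\operatorname{Prox}^{\gamma}_g(x)=\operatorname{argmin}_z\big(g(z)+\frac{1}{2\gamma}\|x-z\|^2\big)$. The Prox-TMM method: $q=\mu/L$, $z^0=x^0$, and for $k=0,1,2,\dots$: $y^k=\frac{2\sqrt q}{1+\sqrt q}z^k+\frac{1-\sqrt q}{1+\sqrt q}x^k$, $\bar z^{k+1}=(1-\sqrt q)z^k+\sqrt q\,y^k-\frac{1}{\sqrt q L}\nabla f(y^k)$, $z^{k+1}=\operatorname{Prox}^{1/(\sqrt q L)}_g(\bar z^{k+1})$, $x^{k+1}=y^k-\frac1L\nabla f(y^k)-\sqrt q(\bar z^{k+1}-z^{k+1})$. *)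

From HB Require Import structures.
From mathcomp Require Import all_boot all_order all_algebra.
From mathcomp Require Import all_classical all_reals all_analysis.
Set Implicit Arguments. Unset Strict Implicit. Unset Printing Implicit Defensive.
Import Order.TTheory GRing.Theory Num.Theory.
Import numFieldNormedType.Exports.
Local Open Scope classical_set_scope.
Local Open Scope ring_scope.

Definition is_inner_product (R : realType) (V : completeNormedModType R)
  (ip : V -> V -> R) : Prop :=
  [/\ forall x y, ip x y = ip y x,
      forall a x y z, ip (a *: x + y) z = a * ip x z + ip y z &
      forall x, `|x| ^+ 2 = ip x x].

Definition is_gradient (R : realType) (V : completeNormedModType R)
  (ip : V -> V -> R) (f : V -> R) (grad : V -> V) : Prop :=
  forall x, (fun h : V => `|f (x + h) - f x - ip (grad x) h| / `|h|) @ 0^'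
            --> (0 : R).

Definition L_smooth (R : realType) (V : completeNormedModType R)
  (ip : V -> V -> R) (L : R) (f : V -> R) (grad : V -> V) : Prop :=
  is_gradient ip f grad /\ forall x y, `|grad x - grad y| <= L * `|x - y|.

Definition convex_fun (R : realType) (V : completeNormedModType R)
  (h : V -> R) : Prop :=
  forall (x y : V) (t : R), 0 <= t <= 1 ->
    h (t *: x + (1 - t) *: y) <= t * h x + (1 - t) * h y.

Definition strongly_convex (R : realType) (V : completeNormedModType R)
  (mu : R) (f : V -> R) : Prop :=
  convex_fun (fun x => f x - mu / 2 * `|x| ^+ 2).

Definition convex_efun (R : realType) (V : completeNormedModType R)
  (g : V -> \bar R) : Prop :=
  forall (x y : V) (t : R), 0 <= t <= 1 ->
    (g (t *: x + (1 - t) *: y)%R <= t%:E * g x + (1 - t)%:E * g y)%E.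

Definition proper_efun (R : realType) (V : completeNormedModType R)
  (g : V -> \bar R) : Prop :=
  (exists x, g x < +oo)%E /\ (forall x, g x != -oo)%E.

Definition is_prox (R : realType) (V : completeNormedModType R)
  (g : V -> \bar R) (gamma : R) (x p : V) : Prop :=
  forall w : V,
    (g p + ((2 * gamma)^-1 * `|x - p| ^+ 2)%:E
     <= g w + ((2 * gamma)^-1 * `|x - w| ^+ 2)%:E)%E.

Definition is_minimizer (R : realType) (V : completeNormedModType R)
  (f : V -> R) (g : V -> \bar R) (xs : V) : Prop :=
  forall w : V, ((f xs)%:E + g xs <= (f w)%:E + g w)%E.

Definition prox_TMM (R : realType) (V : completeNormedModType R)
  (mu L : R) (grad : V -> V) (g : V -> \bar R)
  (x y z zbar : nat -> V) : Prop :=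
  let q := mu / L in
  z 0%N = x 0%N /\
  forall k : nat,
  [/\ y k = (2 * Num.sqrt q / (1 + Num.sqrt q)) *: z k
            + ((1 - Num.sqrt q) / (1 + Num.sqrt q)) *: x k,
      zbar k.+1 = (1 - Num.sqrt q) *: z k + Num.sqrt q *: y k
                  - (Num.sqrt q * L)^-1 *: grad (y k),
      is_prox g (Num.sqrt q * L)^-1 (zbar k.+1) (z k.+1) &
      x k.+1 = y k - L^-1 *: grad (y k) - Num.sqrt q *: (zbar k.+1 - z k.+1)].

(* Tilt [f] and [g] at the minimizer [x*]: [phi = f - f x* - <grad f x*, . - x*> - mu/2 |. - x*|^2]
   is convex and (L - mu)-smooth, [psi = g - g x* + <grad f x*, . - x*>] is convex, and both are
   minimal, with value 0, at [x*].  In these coordinates the Lyapunov function of Prox-TMM, a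
   quadratic form in [z^(k+1) - x*], a subgradient of [psi] at [z^(k+1)], [y^k - x*] and
   [grad phi (y^k)] plus multiples of [phi y^k] and [psi z^(k+1)], dominates |z^(k+1) - x*|^2 / 2
   and is multiplied by at most (1 - sqrt q)^2 at each step: the gap is a nonnegative combination
   of interpolation inequalities of [phi], subgradient inequalities of [psi] and two squares. *)

From HB Require Import structures.
From mathcomp Require Import all_boot all_order all_algebra.
From mathcomp Require Import all_classical all_reals all_analysis.
From mathcomp Require Import ring lra.
Set Implicit Arguments. Unset Strict Implicit. Unset Printing Implicit Defensive.
Import Order.TTheory GRing.Theory Num.Theory.
Import numFieldNormedType.Exports.
Local Open Scope ring_scope.

Lemma convex_combE (R : pzRingType) (V : lmodType R) (t : R) (a b : V) :
  t *: a + (1 - t) *: b = b + t *: (a - b).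
Proof. by rewrite scalerBl scale1r scalerBr addrCA. Qed.

Lemma eq_ler (R : numDomainType) (x y : R) : x = y -> x <= y.
Proof. by move->. Qed.

Lemma ge0_of_eps (R : realFieldType) (X K : R) : 0 <= K ->
  (forall eps, 0 < eps -> - (eps * K) <= X) -> 0 <= X.
Proof.
move=> K_ge0 lowX; rewrite leNgt; apply/negP => X_lt0.
have eps_gt0 : 0 < - X / (K + 1) by rewrite divr_gt0 ?oppr_gt0 ?ltr_wpDl.
have := lowX _ eps_gt0; rewrite mulrAC -mulNr ler_pdivrMr ?ltr_wpDl // => h.
nra.
Qed.

Section InnerProduct.
Variables (R : realType) (V : completeNormedModType R) (ip : V -> V -> R).
Hypothesis ip_inner : is_inner_product ip.

Lemma ipC x y : ip x y = ip y x. Proof. by case: ip_inner. Qed.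

Lemma ipDl x y z : ip (x + y) z = ip x z + ip y z.
Proof. by case: ip_inner => _ lin _; rewrite -[x]scale1r lin mul1r scale1r. Qed.

Lemma ip0l z : ip 0 z = 0.
Proof.
have := ipDl 0 0 z; rewrite addr0 => /eqP.
by rewrite -subr_eq0 opprD addrA subrr sub0r oppr_eq0 => /eqP.
Qed.

Lemma ipZl a x z : ip (a *: x) z = a * ip x z.
Proof. by case: ip_inner => _ lin _; rewrite -[a *: x]addr0 lin ip0l addr0. Qed.

Lemma ipNl x z : ip (- x) z = - ip x z.
Proof. by rewrite -scaleN1r ipZl mulN1r. Qed.

Lemma ipBl x y z : ip (x - y) z = ip x z - ip y z.
Proof. by rewrite ipDl ipNl. Qed.

Lemma ipDr x y z : ip z (x + y) = ip z x + ip z y.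
Proof. by rewrite ipC ipDl !(ipC z). Qed.

Lemma ip0r z : ip z 0 = 0.
Proof. by rewrite ipC ip0l. Qed.

Lemma ipZr a x z : ip z (a *: x) = a * ip z x.
Proof. by rewrite ipC ipZl ipC. Qed.

Lemma ipNr x z : ip z (- x) = - ip z x.
Proof. by rewrite ipC ipNl ipC. Qed.

Lemma ipBr x y z : ip z (x - y) = ip z x - ip z y.
Proof. by rewrite ipDr ipNr. Qed.

Definition ipE := (ipDl, ipDr, ipZl, ipZr, ipBl, ipBr, ipNl, ipNr).

Lemma sqr_norm_ip x : `|x| ^+ 2 = ip x x.
Proof. by case: ip_inner. Qed.

Lemma ipxx_ge0 x : 0 <= ip x x.
Proof. by rewrite -sqr_norm_ip sqr_ge0. Qed.

Lemma eq_of_ip u w : (forall v, ip u v = ip w v) -> u = w.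
Proof.
move=> /(_ (u - w)) /eqP; rewrite -subr_eq0 -ipBl -sqr_norm_ip.
by rewrite expf_eq0 /= normr_eq0 subr_eq0 => /eqP.
Qed.

Lemma ip_le_normM u v : ip u v <= `|u| * `|v|.
Proof.
have := ipxx_ge0 (`|v| *: u - `|u| *: v).
rewrite !ipE -!sqr_norm_ip (ipC v u) => sq_ge0.
have [/eqP|uv_neq0] := eqVneq (`|u| * `|v|) 0.
  by rewrite mulf_eq0 !normr_eq0 => /orP[]/eqP->; rewrite ?ip0l ?ip0r normr0 ?mul0r ?mulr0.
have : 0 < `|u| * `|v| by rewrite lt_def uv_neq0 mulr_ge0.
nra.
Qed.

Lemma sqr_norm_convex_comb (t : R) (a b : V) :
  `|t *: a + (1 - t) *: b| ^+ 2 =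
  t * `|a| ^+ 2 + (1 - t) * `|b| ^+ 2 - t * (1 - t) * `|a - b| ^+ 2.
Proof. by rewrite !sqr_norm_ip !ipE (ipC b a); ring. Qed.

End InnerProduct.

Lemma gradient_approx (R : realType) (V : completeNormedModType R)
    (ip : V -> V -> R) (f : V -> R) (grad : V -> V) b (eps : R) :
  is_gradient ip f grad -> 0 < eps ->
  exists2 del, 0 < del & forall h, h != 0 -> `|h| < del ->
    `|f (b + h) - f b - ip (grad b) h| <= eps * `|h|.
Proof.
move=> df eps_gt0; have /cvgrPdist_lt /(_ eps eps_gt0) := df b.
move=> /nbhs_ballP [del del_gt0 near0]; exists del => // h h_neq0 h_lt.
have : ball (0 : V) del h by rewrite -ball_normE /ball_ /= sub0r normrN.
have h_gt0 : 0 < `|h| by rewrite normr_gt0.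
move=> /near0 /(_ h_neq0) /=; rewrite sub0r normrN normrM normrV ?unitfE ?normr_eq0 //.
by rewrite normr_id ltr_pdivrMr ?normr_id // => /ltW.
Qed.

Section FirstOrder.
Variables (R : realType) (V : completeNormedModType R) (ip : V -> V -> R).
Hypothesis ip_inner : is_inner_product ip.
Variables (f : V -> R) (grad : V -> V).

Lemma strongly_convex_chord mu a b t : strongly_convex mu f -> 0 <= t <= 1 ->
  f (b + t *: (a - b)) <=
  t * f a + (1 - t) * f b - mu / 2 * (t * (1 - t)) * `|a - b| ^+ 2.
Proof.
move=> sc t01; have := sc a b t t01.
by rewrite (sqr_norm_convex_comb ip_inner) convex_combE => h; lra.
Qed.

Lemma strongly_convex_gradient_ge mu : is_gradient ip f grad ->
    strongly_convex mu f -> 0 <= mu -> forall a b,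
  f b + ip (grad b) (a - b) + mu / 2 * `|a - b| ^+ 2 <= f a.
Proof.
move=> df sc mu_ge0 a b.
have [/subr0_eq ->|d_neq0] := eqVneq (a - b) 0.
  by rewrite subrr (ip0r ip_inner) normr0 expr0n /= mulr0 !addr0.
set d := a - b in d_neq0 *; set G := ip (grad b) d; set N := `|d| ^+ 2.
have d_gt0 : 0 < `|d| by rewrite normr_gt0.
have N_ge0 : 0 <= N := sqr_ge0 _.
rewrite -subr_ge0; apply: (ge0_of_eps (K := `|d| + mu / 2 * N)).
  by rewrite addr_ge0 // mulr_ge0 ?divr_ge0.
move=> eps eps_gt0; have [del del_gt0 near_b] := gradient_approx b df eps_gt0.
pose t := Num.min (Num.min 1 eps) (del / (2 * `|d|)).
have t_gt0 : 0 < t by rewrite !lt_min ltr01 eps_gt0 divr_gt0 // mulr_gt0.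
have t_le1 : t <= 1 by rewrite !ge_min lexx.
have t_le_eps : t <= eps by rewrite !ge_min lexx orbT.
have td_lt : t * `|d| < del.
  have : t <= del / (2 * `|d|) by rewrite ge_min lexx orbT.
  by rewrite ler_pdivlMr ?mulr_gt0 // => h; nra.
have td_neq0 : t *: d != 0 by rewrite scaler_eq0 negb_or d_neq0 andbT gt_eqF.
have := near_b _ td_neq0; rewrite normrZ gtr0_norm // (ipZr ip_inner) => /(_ td_lt).
rewrite ler_norml => /andP[tangent_le _].
have := strongly_convex_chord a b (t := t) sc; rewrite t_le1 ltW // => /(_ isT) chord.
have : t * (G - eps * `|d|) <= t * (f a - f b - mu / 2 * (1 - t) * N).
  by rewrite -/d -/N -/G in chord tangent_le; set F := f (b + t *: d) in tangent_le chord; nra.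
rewrite ler_pM2l // => slope_le.
have : mu / 2 * t * N <= mu / 2 * eps * N.
  by rewrite ler_wpM2r // ler_wpM2l // divr_ge0.
nra.
Qed.

Section Descent.
Hypothesis f_ge_tangent : forall a b, f b + ip (grad b) (a - b) <= f a.
Variable L : R.
Hypothesis grad_lip : forall x y, `|grad x - grad y| <= L * `|x - y|.
Hypothesis L_ge0 : 0 <= L.

(* A Riemann-sum substitute for integrating the gradient along [b, a]. *)
Lemma descent_grid a b n i : (0 < n)%N ->
  f (b + (i%:R / n%:R) *: (a - b)) - f b <=
  i%:R / n%:R * ip (grad b) (a - b)
  + L * `|a - b| ^+ 2 * (i%:R * (i%:R + 1)) / (2 * n%:R ^+ 2).
Proof.
move=> n_gt0; have n_pos : 0 < n%:R :> R by rewrite ltr0n.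
set d := a - b; set G := ip (grad b) d; set N := `|d| ^+ 2.
have N_ge0 : 0 <= N := sqr_ge0 _.
elim: i => [|i IH]; first by rewrite !mul0r scale0r addr0 subrr mulr0 mul0r addr0.
set bi := b + (i%:R / n%:R) *: d in IH *; set bj := b + (i.+1%:R / n%:R) *: d.
have step : bj - bi = n%:R^-1 *: d.
  by rewrite opprD addrACA subrr add0r -scalerBl -mulrBl -natrB // subSnn mul1r.
have tangent := f_ge_tangent bi bj.
have gap : ip (grad bj - grad b) d <= L * (i.+1%:R / n%:R) * N.
  apply: le_trans (ip_le_normM ip_inner _ _) _.
  rewrite /N expr2 mulrA ler_wpM2r //.
  apply: le_trans (grad_lip _ _) _.
  by rewrite /bj addrAC subrr add0r normrZ ger0_norm ?divr_ge0 // mulrA.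
have : n%:R^-1 * ip (grad bj - grad b) d <= n%:R^-1 * (L * (i.+1%:R / n%:R) * N).
  by rewrite ler_wpM2l // invr_ge0 ltW.
rewrite -opprB step (ipNr ip_inner) (ipZr ip_inner) in tangent.
rewrite (ipBl ip_inner) -/G -natr1 in gap * => gap_n.
have -> : (i%:R + 1) / n%:R * G + L * N * ((i%:R + 1) * (i%:R + 1 + 1)) / (2 * n%:R ^+ 2)
   = (i%:R / n%:R * G + L * N * (i%:R * (i%:R + 1)) / (2 * n%:R ^+ 2))
     + n%:R^-1 * G + n%:R^-1 * (L * ((i%:R + 1) / n%:R) * N).
  by field; rewrite gt_eqF.
lra.
Qed.

Lemma descent a b : f a <= f b + ip (grad b) (a - b) + L / 2 * `|a - b| ^+ 2.
Proof.
set G := ip (grad b) (a - b); set N := `|a - b| ^+ 2.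
have N_ge0 : 0 <= N := sqr_ge0 _.
have LN_ge0 : 0 <= L * N / 2 by rewrite divr_ge0 // mulr_ge0.
rewrite -subr_ge0; set X := _ - _.
have grid_n n : (0 < n)%N -> - (L * N / 2 / n%:R) <= X.
  move=> n_gt0; have n_pos : 0 < n%:R :> R by rewrite ltr0n.
  have := descent_grid a b n n_gt0.
  rewrite divff ?gt_eqF // scale1r subrKC mul1r -/G -/N.
  have -> : L * N * (n%:R * (n%:R + 1)) / (2 * n%:R ^+ 2) = L * N / 2 + L * N / 2 / n%:R.
    by field; rewrite gt_eqF.
  rewrite /X; lra.
apply: (ge0_of_eps LN_ge0) => eps eps_gt0.
have inv_ge0 : 0 <= eps^-1 by rewrite invr_ge0 ltW.
have n_big := archi_boundP inv_ge0; set n := Num.Def.archi_bound _ in n_big.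
have n_pos : 0 < n%:R :> R := le_lt_trans inv_ge0 n_big.
apply: le_trans (grid_n n _); last by rewrite -(ltr0n R).
have eps_n_ge1 : 1 <= eps * n%:R.
  have : eps * eps^-1 = 1 by rewrite mulfV ?gt_eqF.
  nra.
rewrite lerN2 ler_pdivrMr //; nra.
Qed.

End Descent.

Lemma interpolation mu L :
  (forall a b, f b + ip (grad b) (a - b) + mu / 2 * `|a - b| ^+ 2 <= f a) ->
  (forall a b, f a <= f b + ip (grad b) (a - b) + L / 2 * `|a - b| ^+ 2) ->
  mu < L -> forall a b,
  f b + ip (grad b) (a - b)
  + (2 * (L - mu))^-1 * `|grad a - grad b - mu *: (a - b)| ^+ 2
  + mu / 2 * `|a - b| ^+ 2 <= f a.
Proof.
move=> lower upper mu_lt_L a b.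
have Lmu_neq0 : L - mu != 0 by rewrite subr_eq0 gt_eqF.
set D := a - b; set GD := grad a - grad b; set Dl := GD - mu *: D.
(* [w] is the gradient step of length [1 / (L - mu)] from [a] for the (L - mu)-smooth
   function [f] minus its quadratic lower bound at [b]. *)
set w := a - (L - mu)^-1 *: Dl.
have low := lower w b; have up := upper w a.
have w_b : w - b = D - (L - mu)^-1 *: Dl by rewrite /w /D addrAC.
have w_a : w - a = - ((L - mu)^-1 *: Dl) by rewrite /w addrAC subrr add0r.
have grad_a : grad a = grad b + GD by rewrite /GD addrC subrK.
rewrite w_b in low; rewrite w_a grad_a in up.
clearbody w D GD; rewrite /Dl !(sqr_norm_ip ip_inner) in low up *.
rewrite !(ipE ip_inner) ?(ipC ip_inner GD D) ?(ipC ip_inner GD (grad b))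
  ?(ipC ip_inner D (grad b)) in low up *.
rewrite -subr_ge0 in low; rewrite -subr_ge0 in up; rewrite -subr_ge0.
by apply: le_trans (addr_ge0 low up) (eq_ler _); field.
Qed.

End FirstOrder.

Section ConvexMinimizer.
Variables (R : realType) (V : completeNormedModType R).
Variables (g : V -> \bar R) (h : V -> R) (p : V).
Hypothesis g_proper : proper_efun g.
Hypothesis p_min : forall u, ((h p)%:E + g p <= (h u)%:E + g u)%E.

Lemma minimizer_fin_num : g p \is a fin_num.
Proof.
case: g_proper => [[w gw_lt] g_neq_ninfty]; rewrite fin_numE g_neq_ninfty /=.
apply/eqP => gp_infty; move: (p_min w) gw_lt; rewrite gp_infty addey // leye_eq.
by case: (g w) => //= r /eqP.
Qed.

Hypothesis g_convex : convex_efun g.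

Lemma minimizer_variational w c K :
  (forall t, 0 < t <= 1 -> h (p + t *: (w - p)) <= h p + t * c + t ^+ 2 * K) ->
  ((fine (g p) - c)%:E <= g w)%E.
Proof.
move=> h_ray; case: g_proper => _ g_neq_ninfty.
have gpE := fineK minimizer_fin_num; set gp := fine (g p) in gpE *.
move gwE : (g w) => [gw| |]; [|by rewrite leey|by have := g_neq_ninfty w; rewrite gwE].
rewrite lee_fin -subr_ge0; set X := gw - (gp - c).
have ray t : 0 < t <= 1 -> - (t * K) <= X.
  move=> /andP[t_gt0 t_le1]; set u := p + t *: (w - p).
  have := g_convex w p (t := t); rewrite ltW //= t_le1 convex_combE gwE -gpE.
  rewrite -!EFinM -EFinD => /(_ isT) chord.
  have gu_fin : g u \is a fin_num.
    by rewrite fin_numE g_neq_ninfty (lt_eqF (le_lt_trans chord (ltry _))).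
  have := p_min u; rewrite -gpE -(fineK gu_fin) -!EFinD lee_fin => min_u.
  rewrite -(fineK gu_fin) lee_fin in chord.
  have := h_ray t; rewrite t_gt0 t_le1 => /(_ isT) ray_t.
  have : 0 <= t * (X + t * K) by rewrite /X; lra.
  by rewrite pmulr_rge0 // => ?; lra.
apply: (ge0_of_eps (K := `|K|)) => // eps eps_gt0.
pose t := Num.min 1 eps.
have t_gt0 : 0 < t by rewrite lt_min ltr01 eps_gt0.
have t_le_eps : t <= eps by rewrite ge_min lexx orbT.
apply: le_trans (ray t _); last by rewrite t_gt0 ge_min lexx.
rewrite lerN2 (le_trans (ler_wpM2l (ltW t_gt0) (ler_norm K))) //.
by rewrite ler_wpM2r.
Qed.

End ConvexMinimizer.

Section Subgradients.
Variables (R : realType) (V : completeNormedModType R) (ip : V -> V -> R).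
Hypothesis ip_inner : is_inner_product ip.
Variable g : V -> \bar R.
Hypotheses (g_proper : proper_efun g) (g_convex : convex_efun g).

Lemma prox_fin_num gam zb p : is_prox g gam zb p -> g p \is a fin_num.
Proof.
move=> prox; apply: (minimizer_fin_num (h := fun u => (2 * gam)^-1 * `|zb - u| ^+ 2)) => //.
by move=> u; rewrite addeC (addeC (_%:E)).
Qed.

Lemma prox_subgradient gam zb p w : is_prox g gam zb p ->
  ((fine (g p) + gam^-1 * ip (zb - p) (w - p))%:E <= g w)%E.
Proof.
move=> prox.
have := @minimizer_variational _ _ g (fun u => (2 * gam)^-1 * `|zb - u| ^+ 2) p
  g_proper _ g_convex w (- (gam^-1 * ip (zb - p) (w - p)))
  ((2 * gam)^-1 * `|w - p| ^+ 2).
rewrite opprK; apply; first by move=> u; rewrite addeC (addeC (_%:E)).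
move=> t _; apply: eq_ler.
rewrite !(sqr_norm_ip ip_inner) !(ipE ip_inner) (ipC ip_inner w zb) (ipC ip_inner p zb).
(* The identity also holds for [gam = 0], so [gam^-1] is abstracted before [field]. *)
by rewrite (ipC ip_inner w p) invfM; move: gam^-1 => gi; field.
Qed.

Variables (f : V -> R) (grad : V -> V) (L : R).
Hypothesis f_descent :
  forall a b, f a <= f b + ip (grad b) (a - b) + L / 2 * `|a - b| ^+ 2.

Lemma minimizer_subgradient xs w : is_minimizer f g xs ->
  ((fine (g xs) - ip (grad xs) (w - xs))%:E <= g w)%E.
Proof.
move=> xs_min; apply: (minimizer_variational g_proper xs_min g_convex
  (K := L / 2 * `|w - xs| ^+ 2)).
move=> t /andP[t_gt0 _]; apply: le_trans (f_descent _ xs) _.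
have -> : xs + t *: (w - xs) - xs = t *: (w - xs) by rewrite addrC addKr.
rewrite (ipZr ip_inner) normrZ gtr0_norm // exprMn.
by apply: eq_ler; ring.
Qed.

End Subgradients.

Section Lyapunov.
Variables (R : realType) (V : completeNormedModType R) (ip : V -> V -> R).
Hypothesis ip_inner : is_inner_product ip.
Variables s L : R.

(* In the iteration: [Z = z^(k+1) - x*], [Vv] a subgradient of [psi] at [z^(k+1)],
   [P = y^k - x*], [Gp] the gradient of [phi] at [y^k], [phiP = phi y^k] and
   [psiZ = psi z^(k+1)], for the tilted functions [phi] and [psi] of the iteration below. *)
Definition tmm_lyapunov (Z Vv P Gp : V) (phiP psiZ : R) : R :=
  ip Z Z + ip Z Vv / L + ip Vv Vv / (2 * s ^+ 2 * L ^+ 2)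
  + (1 - s ^+ 2) / (s ^+ 2 * L) * phiP - ip Gp Gp / (2 * s ^+ 2 * L ^+ 2)
  - psiZ / (s * L).

Lemma tmm_lyapunov_ge (Z Vv P Gp : V) (phiP psiZ : R) :
  0 < s -> s < 1 -> 0 < L ->
  (2 * (L * (1 - s ^+ 2)))^-1 * ip Gp Gp <= phiP ->
  psiZ + ip Vv (- Z) <= 0 ->
  ip Z Z / 2 <= tmm_lyapunov Z Vv P Gp phiP psiZ.
Proof.
move=> s_gt0 s_lt1 L_gt0 phiP_ge psiZ_le.
have s2_neq1 : 1 - s ^+ 2 != 0 by apply/eqP => h; nra.
have sq1 := ipxx_ge0 ip_inner (Z - ((1 - s) / (s * L)) *: Vv).
have sq2 := ipxx_ge0 ip_inner Vv.
rewrite /tmm_lyapunov; move: sq1 psiZ_le.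
rewrite !(ipE ip_inner) (ipC ip_inner Vv Z) => sq1 psiZ_le.
rewrite -subr_ge0 in phiP_ge; rewrite -subr_ge0 in psiZ_le.
have s2_le1 : 0 <= 1 - s ^+ 2 by rewrite subr_ge0 expr2; nra.
have w1 : 0 <= (1 - s ^+ 2) / (s ^+ 2 * L) by rewrite divr_ge0 // mulr_ge0 ?sqr_ge0 ?ltW.
have w2 : 0 <= (s * L)^-1 by rewrite invr_ge0 mulr_ge0 ?ltW.
have w3 : 0 <= (1 - (1 - s) ^+ 2) / (2 * s ^+ 2 * L ^+ 2).
  apply: divr_ge0; last by rewrite mulr_ge0 ?sqr_ge0 // mulr_ge0 ?sqr_ge0.
  rewrite subr_ge0 expr2; nra.
have w4 : 0 <= (2 : R)^-1 by rewrite invr_ge0.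
rewrite -subr_ge0; apply: le_trans (eq_ler _).
  exact: addr_ge0 (addr_ge0 (addr_ge0 (mulr_ge0 w1 phiP_ge) (mulr_ge0 w2 psiZ_le))
    (mulr_ge0 w4 sq1)) (mulr_ge0 w3 sq2).
by field; rewrite s2_neq1 !gt_eqF.
Qed.

Lemma tmm_lyapunov_contraction (Z P Gp Vv E Vp Y Z1 : V) (phiP phiY psiZ psiZ1 : R) :
  0 < s -> s < 1 -> 0 < L ->
  Y = (2 * s / (1 + s)) *: Z
      + ((1 - s) / (1 + s)) *: ((1 - s ^+ 2) *: P - L^-1 *: (Gp + Vv)) ->
  Z1 = (1 - s) *: Z - (s * L)^-1 *: (E + Vp) ->
  phiY + ip E (- Y) + (2 * (L * (1 - s ^+ 2)))^-1 * ip E E <= 0 ->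
  phiY + ip E (P - Y) + (2 * (L * (1 - s ^+ 2)))^-1 * ip (Gp - E) (Gp - E) <= phiP ->
  psiZ1 + ip Vp (- Z1) <= 0 ->
  0 <= psiZ1 ->
  psiZ + ip Vv (Z1 - Z) <= psiZ1 ->
  tmm_lyapunov Z1 Vp Y E phiY psiZ1 <= (1 - s) ^+ 2 * tmm_lyapunov Z Vv P Gp phiP psiZ.
Proof.
move=> s_gt0 s_lt1 L_gt0 -> -> interp_Y0 interp_YP sub_Z1 psiZ1_ge0 sub_Z.
have sq1 := ipxx_ge0 ip_inner (Vp - (1 - s) ^+ 2 *: Vv).
have sq2 := ipxx_ge0 ip_inner Vv.
rewrite /tmm_lyapunov; move: interp_Y0 interp_YP sub_Z1 sub_Z sq1 sq2.
rewrite ?(ipE ip_inner) ?(ipC ip_inner P Z) ?(ipC ip_inner Gp Z) ?(ipC ip_inner Vv Z)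
  ?(ipC ip_inner E Z) ?(ipC ip_inner Vp Z) ?(ipC ip_inner Gp P) ?(ipC ip_inner Vv P)
  ?(ipC ip_inner E P) ?(ipC ip_inner Vp P) ?(ipC ip_inner Vv Gp) ?(ipC ip_inner E Gp)
  ?(ipC ip_inner Vp Gp) ?(ipC ip_inner E Vv) ?(ipC ip_inner Vp Vv) ?(ipC ip_inner Vp E).
rewrite -![_ + _ <= 0]subr_ge0 -![_ <= phiP]subr_ge0 -![_ <= psiZ1]subr_ge0 sub0r.
move=> interp_Y0 interp_YP sub_Z1 sub_Z sq1 sq2.
set a := (1 - s ^+ 2) / s ^+ 2; set r2 := (1 - s) ^+ 2.
have r2_ge0 : 0 <= r2 by exact: sqr_ge0.
have r2_le1 : r2 <= 1 by rewrite /r2 expr2; nra.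
have a_ge0 : 0 <= a by rewrite /a divr_ge0 ?sqr_ge0 // expr2; nra.
have w1 : 0 <= a * (1 - r2) / L.
  by apply: divr_ge0 (ltW L_gt0); rewrite mulr_ge0 // subr_ge0.
have w2 : 0 <= a * r2 / L by apply: divr_ge0 (ltW L_gt0); rewrite mulr_ge0.
have w3 : 0 <= (2 / s - 1) / L.
  by apply: divr_ge0 (ltW L_gt0); rewrite subr_ge0 ler_pdivlMr // mul1r; lra.
have w4 : 0 <= (2 / s + 1 - s) / L.
  apply: divr_ge0 (ltW L_gt0).
  have : 0 <= 2 / s by rewrite divr_ge0 // ltW.
  lra.
have w5 : 0 <= r2 / s / L by apply: divr_ge0 (ltW L_gt0); exact: divr_ge0 r2_ge0 (ltW s_gt0).
have w6 : 0 <= (2 * s ^+ 2 * L ^+ 2)^-1.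
  by rewrite invr_ge0 mulr_ge0 ?sqr_ge0 // mulr_ge0 ?sqr_ge0.
have w7 : 0 <= r2 * (1 - r2) by rewrite mulr_ge0 ?subr_ge0.
(* The gap is exactly this nonnegative combination of the hypotheses and two squares. *)
rewrite -subr_ge0; apply: le_trans (eq_ler _).
  exact: addr_ge0 (addr_ge0 (addr_ge0 (addr_ge0 (addr_ge0
    (mulr_ge0 w1 interp_Y0) (mulr_ge0 w2 interp_YP)) (mulr_ge0 w3 sub_Z1))
    (mulr_ge0 w4 psiZ1_ge0)) (mulr_ge0 w5 sub_Z)) (mulr_ge0 w6 (addr_ge0 sq1 (mulr_ge0 w7 sq2))).
rewrite /a /r2; field.
have s2_neq1 : 1 - s ^+ 2 != 0 by apply/eqP => h; nra.
have s_neqN1 : 1 + s != 0 by apply/eqP => h; nra.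
by rewrite s2_neq1 s_neqN1 !gt_eqF.
Qed.

End Lyapunov.

Lemma sqrt_ratio_gt0 (R : rcfType) (mu L : R) : 0 < mu -> mu < L ->
  0 < Num.sqrt (mu / L).
Proof.
move=> mu_gt0 mu_lt_L.
by rewrite sqrtr_gt0 divr_gt0 // (lt_trans mu_gt0 mu_lt_L).
Qed.

Lemma sqrt_ratio_lt1 (R : rcfType) (mu L : R) : 0 < mu -> mu < L ->
  Num.sqrt (mu / L) < 1.
Proof.
move=> mu_gt0 mu_lt_L; have L_gt0 := lt_trans mu_gt0 mu_lt_L.
by rewrite -(sqrtr1 R) ltr_sqrt ?ltr01 // ltr_pdivrMr // mul1r.
Qed.

Section ProxTMM.
Variables (R : realType) (V : completeNormedModType R) (ip : V -> V -> R).
Variables (f : V -> R) (grad : V -> V) (g : V -> \bar R) (mu L : R).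
Variables (x y z zbar : nat -> V) (xs : V).
Hypotheses (ip_inner : is_inner_product ip) (mu_gt0 : 0 < mu) (mu_lt_L : mu < L).
Hypotheses (f_sc : strongly_convex mu f) (f_smooth : L_smooth ip L f grad).
Hypotheses (g_convex : convex_efun g) (g_proper : proper_efun g).
Hypotheses (tmm : prox_TMM mu L grad g x y z zbar) (xs_min : is_minimizer f g xs).

Let s := Num.sqrt (mu / L).
Let L_gt0 : 0 < L := lt_trans mu_gt0 mu_lt_L.
Let s_gt0 : 0 < s := sqrt_ratio_gt0 mu_gt0 mu_lt_L.
Let s_lt1 : s < 1 := sqrt_ratio_lt1 mu_gt0 mu_lt_L.

Let mu_sL : mu = s ^+ 2 * L.
Proof. by rewrite sqr_sqrtr ?divfK ?gt_eqF // divr_ge0 ?ltW. Qed.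

Let L_sub_mu : L - mu = L * (1 - s ^+ 2).
Proof. by rewrite mu_sL; ring. Qed.

Let f_ge := strongly_convex_gradient_ge ip_inner (proj1 f_smooth) f_sc (ltW mu_gt0).

Let f_le : forall a b, f a <= f b + ip (grad b) (a - b) + L / 2 * `|a - b| ^+ 2.
Proof.
apply: (descent ip_inner _ (proj2 f_smooth) (ltW L_gt0)) => a b.
by apply: le_trans (f_ge a b); rewrite lerDl mulr_ge0 ?sqr_ge0 // divr_ge0 // ltW.
Qed.

(* [phi] and [psi] are [f] and [g] tilted so that both are minimal, with value 0, at [xs];
   [phi] is convex and (L - mu)-smooth with gradient [gphi], and [subg n] is the subgradient
   of [psi] at [z^(n+1)] produced by the prox step.  [psi] reads [g] through [fine], so it
   is only meaningful where [g] is finite. *)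
Definition phi u := f u - f xs - ip (grad xs) (u - xs) - mu / 2 * ip (u - xs) (u - xs).

Definition gphi u := grad u - grad xs - mu *: (u - xs).

Definition psi u := fine (g u) - fine (g xs) + ip (grad xs) (u - xs).

Definition subg n := (s * L) *: (zbar n.+1 - z n.+1) + grad xs.

Lemma phi_interp a b :
  phi b + ip (gphi b) (a - b) + (2 * (L - mu))^-1 * ip (gphi a - gphi b) (gphi a - gphi b)
  <= phi a.
Proof.
have := interpolation ip_inner f_ge f_le mu_lt_L a b; rewrite -subr_ge0 => interp.
rewrite -subr_ge0; apply: le_trans interp (eq_ler _).
rewrite /phi /gphi !(sqr_norm_ip ip_inner).
move: (grad a) (grad b) (grad xs) (2 * (L - mu))^-1 => ga gb gs c.
rewrite !(ipE ip_inner) ?(ipC ip_inner b a) ?(ipC ip_inner xs a) ?(ipC ip_inner ga a)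
  ?(ipC ip_inner gb a) ?(ipC ip_inner gs a) ?(ipC ip_inner xs b) ?(ipC ip_inner ga b)
  ?(ipC ip_inner gb b) ?(ipC ip_inner gs b) ?(ipC ip_inner ga xs) ?(ipC ip_inner gb xs)
  ?(ipC ip_inner gs xs) ?(ipC ip_inner gb ga) ?(ipC ip_inner gs ga) ?(ipC ip_inner gs gb).
by field.
Qed.

Lemma phi_xs : phi xs = 0.
Proof. by rewrite /phi !subrr !(ip0r ip_inner) mulr0 !subr0. Qed.

Lemma gphi_xs : gphi xs = 0.
Proof. by rewrite /gphi !subrr scaler0 subr0. Qed.

Lemma g_xs_fin_num : g xs \is a fin_num.
Proof. exact (minimizer_fin_num g_proper xs_min). Qed.

Lemma g_z_fin_num n : g (z n.+1) \is a fin_num.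
Proof. by case: tmm => _ /(_ n) [_ _ prox _]; exact (prox_fin_num g_proper prox). Qed.

Lemma psi_xs : psi xs = 0.
Proof. by rewrite /psi !subrr (ip0r ip_inner) addr0. Qed.

Lemma psi_ge0 w : g w \is a fin_num -> 0 <= psi w.
Proof.
move=> gw_fin; have := minimizer_subgradient ip_inner g_proper g_convex f_le w xs_min.
by rewrite -(fineK gw_fin) lee_fin /psi => ?; lra.
Qed.

Lemma psi_subgrad n w : g w \is a fin_num ->
  psi (z n.+1) + ip (subg n) (w - z n.+1) <= psi w.
Proof.
move=> gw_fin; case: tmm => _ /(_ n) [_ _ prox _].
have := prox_subgradient ip_inner g_proper g_convex w prox.
rewrite invrK -(fineK gw_fin) lee_fin /psi /subg !(ipE ip_inner) -/s => ?; lra.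
Qed.

Lemma tmm_y_rec n :
  y n.+1 - xs = (2 * s / (1 + s)) *: (z n.+1 - xs)
    + ((1 - s) / (1 + s)) *: ((1 - s ^+ 2) *: (y n - xs) - L^-1 *: (gphi (y n) + subg n)).
Proof.
case: tmm => _ tmm_k; have [-> _ _ _] := tmm_k n.+1; have [_ _ _ ->] := tmm_k n.
apply: (eq_of_ip ip_inner) => v; rewrite -/s /gphi /subg mu_sL !(ipE ip_inner).
have s_neqN1 : 1 + s != 0 by rewrite gt_eqF // addr_gt0.
by field; rewrite s_neqN1 !gt_eqF.
Qed.

Lemma tmm_z_rec n :
  z n.+2 - xs = (1 - s) *: (z n.+1 - xs) - (s * L)^-1 *: (gphi (y n.+1) + subg n.+1).
Proof.
case: tmm => _ /(_ n.+1) [_ zbarE _ _].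
apply: (eq_of_ip ip_inner) => v; rewrite /gphi /subg zbarE -/s mu_sL !(ipE ip_inner).
by field; rewrite !gt_eqF.
Qed.

Definition tmm_lyap n := tmm_lyapunov ip s L (z n.+1 - xs) (subg n) (y n - xs)
  (gphi (y n)) (phi (y n)) (psi (z n.+1)).

Lemma psi_subgrad_xs n : psi (z n.+1) + ip (subg n) (- (z n.+1 - xs)) <= 0.
Proof. by rewrite opprB -psi_xs psi_subgrad // g_xs_fin_num. Qed.

Lemma tmm_lyap_ge n : `|z n.+1 - xs| ^+ 2 <= 2 * tmm_lyap n.
Proof.
have phi_ge : (2 * (L * (1 - s ^+ 2)))^-1 * ip (gphi (y n)) (gphi (y n)) <= phi (y n).
  have := phi_interp (y n) xs.
  by rewrite phi_xs gphi_xs (ip0l ip_inner) subr0 !add0r L_sub_mu.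
have := tmm_lyapunov_ge ip_inner (y n - xs) s_gt0 s_lt1 L_gt0 phi_ge (psi_subgrad_xs n).
by rewrite (sqr_norm_ip ip_inner) /tmm_lyap => ?; lra.
Qed.

Lemma tmm_lyap_contraction n : tmm_lyap n.+1 <= (1 - s) ^+ 2 * tmm_lyap n.
Proof.
have interp_Y0 : phi (y n.+1) + ip (gphi (y n.+1)) (- (y n.+1 - xs))
    + (2 * (L * (1 - s ^+ 2)))^-1 * ip (gphi (y n.+1)) (gphi (y n.+1)) <= 0.
  rewrite opprB; have := phi_interp xs (y n.+1).
  by rewrite phi_xs gphi_xs sub0r (ipNl ip_inner) (ipNr ip_inner) opprK L_sub_mu.
have interp_YP : phi (y n.+1) + ip (gphi (y n.+1)) ((y n - xs) - (y n.+1 - xs))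
    + (2 * (L * (1 - s ^+ 2)))^-1 * ip (gphi (y n) - gphi (y n.+1)) (gphi (y n) - gphi (y n.+1))
    <= phi (y n).
  by rewrite opprB subrKA -L_sub_mu; exact: phi_interp.
apply: (tmm_lyapunov_contraction ip_inner s_gt0 s_lt1 L_gt0 (tmm_y_rec n) (tmm_z_rec n)
  interp_Y0 interp_YP (psi_subgrad_xs n.+1) (psi_ge0 (g_z_fin_num n.+1))).
by rewrite opprB subrKA; exact: psi_subgrad (g_z_fin_num n.+1).
Qed.

End ProxTMM.

Lemma geometric_rate (R : rcfType) (a W : nat -> R) (r c : R) :
  0 < r -> 0 <= c -> (forall n, 0 <= a n) ->
  (forall n, a n.+1 ^+ 2 <= c * W n) -> (forall n, W n.+1 <= r ^+ 2 * W n) ->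
  exists (C : R) (N : nat), forall k, (N <= k)%N -> a k <= C * r ^+ k.
Proof.
move=> r_gt0 c_ge0 a_ge0 a_le W_le.
have W_geom n : W n <= (r ^+ 2) ^+ n * W 0.
  elim: n => [|n IH]; first by rewrite expr0 mul1r.
  by rewrite exprS -mulrA; apply: le_trans (W_le n) (ler_wpM2l (sqr_ge0 r) IH).
have cW_ge0 : 0 <= c * W 0 := le_trans (sqr_ge0 _) (a_le 0%N).
exists (Num.sqrt (c * W 0) / r), 1%N => -[|n] // _.
have C_ge0 : 0 <= Num.sqrt (c * W 0) / r * r ^+ n.+1.
  by rewrite mulr_ge0 ?exprn_ge0 ?divr_ge0 ?sqrtr_ge0 // ltW.
rewrite -ler_sqr ?nnegrE // exprMn expr_div_n sqr_sqrtr // -exprM mulnC exprM.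
have -> : c * W 0 / r ^+ 2 * (r ^+ 2) ^+ n.+1 = c * ((r ^+ 2) ^+ n * W 0).
  by rewrite (exprS (r ^+ 2)); field; rewrite gt_eqF.
exact: le_trans (a_le n) (ler_wpM2l c_ge0 (W_geom n)).
Qed.

Theorem theorem3 (R : realType) (V : completeNormedModType R)
  (ip : V -> V -> R) (f : V -> R) (grad : V -> V) (g : V -> \bar R)
  (mu L : R) (x y z zbar : nat -> V) (xstar : V) :
  is_inner_product ip ->
  0 < mu -> mu < L ->
  strongly_convex mu f ->
  L_smooth ip L f grad ->
  convex_efun g -> proper_efun g -> lower_semicontinuous g ->
  prox_TMM mu L grad g x y z zbar ->
  is_minimizer f g xstar ->
  exists (C : R) (N : nat), forall k : nat, (N <= k)%N ->
    `|z k - xstar| <= C * (1 - Num.sqrt (mu / L)) ^+ k.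
Proof.
(* Lower semicontinuity of [g] only ensures that the prox points exist; here they are given. *)
move=> ip_inner mu_gt0 mu_lt_L f_sc f_smooth g_convex g_proper _ tmm xs_min.
apply: (geometric_rate (c := 2) (W := tmm_lyap ip f grad g mu L y z zbar xstar)).
- by rewrite subr_gt0; apply: sqrt_ratio_lt1.
- by [].
- by move=> k; exact: normr_ge0.
- exact: (tmm_lyap_ge ip_inner mu_gt0 mu_lt_L f_sc f_smooth g_convex g_proper tmm xs_min).
- exact: (tmm_lyap_contraction ip_inner mu_gt0 mu_lt_L f_sc f_smooth g_convex g_proper tmm xs_min).
Qed.
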